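(* For each $2p\in\{24, 28, 32, 36, 44, 48, 52, 54\}$ there exists a cyclic DCA$(4,2p+1;2p)$ satisfying P1 and P2.
   Context: A difference covering array DCA$(k,\eta;n)$ over $\mathbb{Z}_n$ (a cyclic DCA) is an $\eta\times k$ matrix $Q=[q(i,j)]$ with entries in $\mathbb{Z}_n$ such that for every pair of distinct columns $j,j'$ the multiset $\{q(i,j)-q(i,j') : 0\le i\le \eta-1\}$ contains every element of $\mathbb{Z}_n$ at least once. A DCA$(k,n+1;n)$ is taken in normalized form: all entries of its last row (row $n$) and last column (column $k-1$) equal $0$. It satisfies P1 if $0$ occurs at least twice in every column, and P2 if for all distinct columns $j,j'$ with $j\neq k-1\neq j'$, the set $\{q(i,j)-q(i,j') : 0\le i\le n-1\}$ equals $\mathbb{Z}_n\setminus\{0\}$. *)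

From mathcomp Require Import all_boot all_algebra.
Set Implicit Arguments. Unset Strict Implicit. Unset Printing Implicit Defensive.

(* Entries in Z_n are represented by 'I_n; subtraction in Z_n is
   (a + n - b) %% n. Rows are indexed by 'I_eta, columns by 'I_k. *)
Definition zdiff (n : nat) (a b : 'I_n) : nat := (a + n - b) %% n.

Definition is_DCA (n k eta : nat) (Q : 'M['I_n]_(eta, k)) : Prop :=
  forall j j' : 'I_k, j != j' ->
    forall d : 'I_n, exists i : 'I_eta, zdiff (Q i j) (Q i j') = d.

Definition normalized (n k : nat) (Q : 'M['I_n]_(n.+1, k)) : Prop :=
  (forall j : 'I_k, nat_of_ord (Q ord_max j) = 0) /\
  (forall (i : 'I_n.+1) (j : 'I_k), nat_of_ord j = k.-1 -> nat_of_ord (Q i j) = 0).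

Definition P1 (n k : nat) (Q : 'M['I_n]_(n.+1, k)) : Prop :=
  forall j : 'I_k, 2 <= #|[set i : 'I_n.+1 | nat_of_ord (Q i j) == 0]|.

Definition P2 (n k : nat) (Q : 'M['I_n]_(n.+1, k)) : Prop :=
  forall j j' : 'I_k, j != j' -> nat_of_ord j != k.-1 -> nat_of_ord j' != k.-1 ->
    forall d : nat,
      (exists i : 'I_n.+1, i < n /\ zdiff (Q i j) (Q i j') = d) <-> (0 < d < n).

From mathcomp Require Import all_boot all_algebra zify.
Set Implicit Arguments. Unset Strict Implicit. Unset Printing Implicit Defensive.

(* The arrays are exhibited explicitly.  Each of the four properties of a
   matrix reduces to finitely many comparisons in Z_n, which are decided by
   evaluating boolean checks on the tables; the soundness of these checks is
   proved once, for arbitrary n and k. *)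

Lemma ord_in_iota m (i : 'I_m) : nat_of_ord i \in iota 0 m.
Proof. by rewrite mem_iota ltn_ord. Qed.

Lemma zdiff_lt n (a b : 'I_n) : zdiff a b < n.
Proof. by rewrite ltn_pmod // (leq_ltn_trans _ (ltn_ord a)). Qed.

Section CheckSoundness.

Variables (n k : nat) (q : nat -> nat -> 'I_n).
Local Notation Q := (\matrix_(i < n.+1, j < k) q i j)%R.

Definition diffs_cover (rows : seq nat) (j j' : nat) (ds : seq nat) : bool :=
  all (fun d => has (fun i => zdiff (q i j) (q i j') == d) rows) ds.

Lemma diffs_coverP rows j j' ds d :
  diffs_cover rows j j' ds -> d \in ds ->
  exists2 i, i \in rows & zdiff (q i j) (q i j') = d.
Proof. by move=> /allP cover /cover /hasP [i row_i /eqP]; exists i. Qed.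

Definition is_DCAb : bool :=
  allrel (fun j j' => (j == j') || diffs_cover (iota 0 n.+1) j j' (iota 0 n))
    (iota 0 k) (iota 0 k).

Definition normalizedb : bool :=
  all (fun j => q n j == 0 :> nat) (iota 0 k) &&
  all (fun i => q i k.-1 == 0 :> nat) (iota 0 n.+1).

Definition zero_above_lastb : bool :=
  all (fun j => has (fun i => q i j == 0 :> nat) (iota 0 n)) (iota 0 k).

Definition P2b : bool :=
  allrel (fun j j' => (j == j') ||
      all (fun i => zdiff (q i j) (q i j') != 0) (iota 0 n) &&
      diffs_cover (iota 0 n) j j' (iota 1 n.-1))
    (iota 0 k.-1) (iota 0 k.-1).

Lemma is_DCAb_sound : is_DCAb -> is_DCA Q.
Proof.
move=> /allrelP ok j j' neq_jj' d.
have neq_nat : (j == j' :> nat) = false by exact: negbTE neq_jj'.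
have := ok _ _ (ord_in_iota j) (ord_in_iota j'); rewrite neq_nat orFb.
move=> /diffs_coverP /(_ (ord_in_iota d)) [i row_i diff_i].
have lt_in : i < n.+1 by rewrite mem_iota in row_i.
by exists (Ordinal lt_in); rewrite !mxE.
Qed.

Lemma normalizedb_sound : normalizedb -> normalized Q.
Proof.
case/andP=> /allP last_row /allP last_col; split=> [j | i j last_j]; rewrite mxE.
  exact/eqP/last_row/ord_in_iota.
by rewrite last_j; apply/eqP/last_col/ord_in_iota.
Qed.

(* The second zero of each column is supplied by the all-zero last row. *)
Lemma zero_above_last_P1 : normalizedb -> zero_above_lastb -> P1 Q.
Proof.
move=> /normalizedb_sound [last_row _] /allP zero_col j.
have /hasP [i0 row_i0 Qi0] := zero_col _ (ord_in_iota j).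
have lt_i0n : i0 < n by rewrite mem_iota in row_i0.
pose i : 'I_n.+1 := Ordinal (leqW lt_i0n).
have neq_i_max : i != ord_max by rewrite -val_eqE /= neq_ltn lt_i0n.
apply: leq_trans (subset_leq_card (_ : [set i; ord_max] \subset _)).
  by rewrite cards2 neq_i_max.
by apply/subsetP => x; rewrite !inE => /orP [] /eqP ->; rewrite ?last_row ?mxE.
Qed.

Lemma P2b_sound : P2b -> P2 Q.
Proof.
move=> /allrelP ok j j' neq_jj' not_last_j not_last_j' d.
have j_in : nat_of_ord j \in iota 0 k.-1.
  by rewrite mem_iota /=; have := ltn_ord j; lia.
have j'_in : nat_of_ord j' \in iota 0 k.-1.
  by rewrite mem_iota /=; have := ltn_ord j'; lia.
have neq_nat : (j == j' :> nat) = false by exact: negbTE neq_jj'.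
have := ok _ _ j_in j'_in; rewrite neq_nat orFb => /andP [/allP nz cover].
split=> [[i [lt_in <-]] | /andP [d_gt0 lt_dn]].
  by rewrite !mxE lt0n zdiff_lt nz // mem_iota.
have d_in : d \in iota 1 n.-1 by rewrite mem_iota; lia.
have [i row_i diff_i] := diffs_coverP cover d_in.
have lt_in : i < n by rewrite mem_iota in row_i.
by exists (Ordinal (leqW lt_in)); rewrite !mxE.
Qed.

Definition DCA_checkb : bool :=
  [&& is_DCAb, normalizedb, zero_above_lastb & P2b].

Lemma DCA_checkb_sound :
  DCA_checkb -> is_DCA Q /\ normalized Q /\ P1 Q /\ P2 Q.
Proof.
case/and4P=> dca norm zero p2.
split; first exact: is_DCAb_sound.
split; first exact: normalizedb_sound.
by split; [exact: zero_above_last_P1 | exact: P2b_sound].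
Qed.

End CheckSoundness.

(* Rows and columns absent from a table read as 0: the all-zero row n and
   column 3 of the normal form are not stored. *)
Definition table_entry m (t : seq (seq nat)) (i j : nat) : 'I_m.+1 :=
  inZp (nth 0 (nth [::] t i) j).

Lemma table_DCA m k (t : seq (seq nat)) :
  DCA_checkb k (table_entry m t) ->
  exists Q : 'M['I_m.+1]_(m.+2, k), is_DCA Q /\ normalized Q /\ P1 Q /\ P2 Q.
Proof. by move=> /DCA_checkb_sound; eexists; eassumption. Qed.

Definition indexed_rows (s : seq (nat * nat)) : seq (seq nat) :=
  map (fun '(i, (b, c)) => [:: i; b; c]) (zip (iota 0 (size s)) s).

(* The arrays for n = 48 and 54 are invariant under cyclically permuting
   columns 0, 1, 2; only one row per orbit is listed. *)
Definition rotation_orbits (s : seq (nat * nat * nat)) : seq (seq nat) :=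
  flatten (map (fun '(a, b, c) => [:: [:: a; b; c]; [:: b; c; a]; [:: c; a; b]]) s).

Definition dca24 : seq (seq nat) := indexed_rows [::
  (9, 16); (7, 5); (12, 17); (19, 11); (15, 23); (13, 10); (3, 15); (20, 19);
  (10, 1); (4, 21); (0, 9); (23, 13); (11, 6); (6, 0); (8, 12); (18, 4);
  (21, 22); (5, 7); (1, 14); (17, 20); (16, 3); (22, 18); (2, 8); (14, 2)].

Definition dca28 : seq (seq nat) := indexed_rows [::
  (12, 7); (16, 18); (19, 16); (5, 19); (0, 10); (23, 14); (20, 27);
  (13, 22); (21, 6); (4, 5); (26, 12); (8, 24); (6, 4); (17, 21); (15, 11);
  (18, 1); (27, 20); (10, 0); (25, 9); (11, 3); (1, 23); (7, 15); (2, 17);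
  (14, 13); (22, 25); (24, 2); (3, 8); (9, 26)].

Definition dca32 : seq (seq nat) := indexed_rows [::
  (18, 11); (5, 7); (28, 20); (20, 16); (29, 13); (24, 21); (21, 25);
  (4, 12); (7, 1); (1, 24); (19, 6); (13, 28); (23, 4); (2, 8); (26, 3);
  (10, 22); (0, 14); (22, 27); (16, 0); (25, 23); (11, 10); (17, 18);
  (12, 2); (31, 17); (27, 15); (6, 9); (8, 29); (15, 26); (3, 30); (30, 5);
  (14, 31); (9, 19)].

Definition dca36 : seq (seq nat) := indexed_rows [::
  (34, 19); (2, 21); (18, 17); (27, 16); (19, 12); (17, 30); (16, 34);
  (30, 10); (10, 5); (22, 27); (14, 32); (29, 23); (15, 13); (4, 0); (6, 20);
  (5, 9); (25, 26); (1, 8); (24, 3); (13, 33); (3, 29); (32, 2); (8, 18);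
  (20, 11); (9, 6); (7, 15); (33, 25); (35, 22); (23, 35); (28, 31);
  (11, 28); (0, 24); (21, 7); (26, 1); (12, 14); (31, 4)].

Definition dca44 : seq (seq nat) := indexed_rows [::
  (23, 22); (39, 37); (35, 13); (19, 32); (15, 19); (11, 14); (27, 1);
  (33, 20); (32, 43); (12, 29); (17, 3); (26, 41); (34, 16); (21, 0);
  (42, 10); (24, 12); (13, 21); (8, 24); (6, 28); (2, 40); (1, 42); (7, 2);
  (18, 38); (36, 26); (43, 6); (30, 23); (28, 34); (5, 7); (20, 11);
  (14, 35); (25, 5); (41, 25); (22, 31); (3, 17); (38, 4); (9, 36); (4, 9);
  (10, 39); (31, 27); (37, 18); (16, 8); (40, 15); (29, 30); (0, 33)].

Definition dca48 : seq (seq nat) := rotation_orbits [::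
  (0, 16, 35); (1, 38, 26); (2, 41, 17); (8, 7, 32); (4, 39, 9);
  (10, 13, 47); (6, 18, 45); (11, 33, 27); (19, 40, 36); (5, 22, 3);
  (12, 20, 46); (15, 21, 25); (28, 43, 23); (14, 44, 42); (24, 34, 31);
  (29, 30, 37)].

Definition dca52 : seq (seq nat) := indexed_rows [::
  (34, 47); (26, 7); (32, 5); (49, 32); (15, 41); (19, 37); (25, 34);
  (3, 25); (1, 22); (29, 43); (47, 1); (42, 49); (35, 31); (21, 15);
  (40, 18); (6, 30); (17, 3); (16, 11); (33, 38); (43, 2); (24, 16);
  (31, 13); (28, 27); (11, 12); (22, 48); (5, 33); (12, 10); (44, 0);
  (41, 45); (10, 39); (14, 46); (0, 42); (27, 44); (36, 21); (8, 24);
  (18, 28); (48, 35); (13, 6); (30, 9); (9, 36); (4, 19); (7, 50); (51, 40);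
  (50, 17); (46, 14); (20, 23); (23, 20); (37, 8); (45, 29); (2, 4);
  (39, 51); (38, 26)].

Definition dca54 : seq (seq nat) := rotation_orbits [::
  (0, 34, 5); (7, 44, 22); (3, 1, 14); (4, 18, 25); (6, 24, 52); (2, 29, 53);
  (13, 35, 26); (10, 19, 16); (17, 46, 36); (8, 20, 43); (9, 39, 32);
  (15, 21, 48); (30, 50, 42); (31, 41, 45); (33, 38, 37); (28, 12, 27);
  (11, 47, 49); (23, 40, 51)].

Theorem mainTheorem16 :
  forall n : nat, n \in [:: 24; 28; 32; 36; 44; 48; 52; 54] ->
    exists Q : 'M['I_n]_(n.+1, 4),
      is_DCA Q /\ normalized Q /\ P1 Q /\ P2 Q.
Proof.
move=> n; rewrite !inE.
case/orP=> [/eqP-> | ]; first by apply: (table_DCA (t := dca24)); vm_compute.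
case/orP=> [/eqP-> | ]; first by apply: (table_DCA (t := dca28)); vm_compute.
case/orP=> [/eqP-> | ]; first by apply: (table_DCA (t := dca32)); vm_compute.
case/orP=> [/eqP-> | ]; first by apply: (table_DCA (t := dca36)); vm_compute.
case/orP=> [/eqP-> | ]; first by apply: (table_DCA (t := dca44)); vm_compute.
case/orP=> [/eqP-> | ]; first by apply: (table_DCA (t := dca48)); vm_compute.
case/orP=> [/eqP-> | ]; first by apply: (table_DCA (t := dca52)); vm_compute.
by move=> /eqP->; apply: (table_DCA (t := dca54)); vm_compute.
Qed.
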